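(* Let $A\in\mathsf{M}_n(\mathbb{C})$ be $h$-cyclic with consecutive partition $P=\{V_1,\dots,V_h\}$. Let $i\in\{1,\dots,h\}$, $x\in\mathbb{C}^{|V_i|}$, and let $v\in\mathbb{C}^n$, partitioned conformably with $P$ as $v=(v_1,\dots,v_h)$ with $v_k\in\mathbb{C}^{|V_k|}$, be defined by $v_i=x$ and $v_k=0$ for $k\neq i$. Then for every positive integer $p$, the $k$-th block of $A^pv$ equals $B_{ip}x$ if $k=\alpha^{-p}(i)$ and equals $0$ if $k\neq\alpha^{-p}(i)$.
   Context: $P=\{V_1,\dots,V_h\}$ is a consecutive partition of $\{1,\dots,n\}$ into nonempty sets: $V_1=\{1,\dots,i_1\}$, $V_2=\{i_1+1,\dots,i_2\}$, \dots, $V_h=\{i_{h-1}+1,\dots,n\}$. $A_{ij}$ denotes the submatrix $A(V_i,V_j)$. $A$ being $h$-cyclic with partition $P$ means $A_{ij}=0$ unless $j\equiv i+1\pmod h$, so the only possibly nonzero blocks are $A_{12},\dots,A_{h-1,h},A_{h1}$. Let $\alpha$ be the permutation of $\{1,\dots,h\}$ given by $\alpha(i)=(i\bmod h)+1$ (so $\alpha^{-1}(i)=i-1$ for $i>1$ and $\alpha^{-1}(1)=h$). For $i\in\{1,\dots,h\}$ and $p\in\mathbb{N}$, $B_{ip}:=\prod_{j=h+1-p}^{h}A_{\alpha^{j-1}(i),\alpha^{j}(i)}$, the product taken in increasing order of $j$. *)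

From mathcomp Require Import all_boot all_order all_algebra all_field.
Set Implicit Arguments. Unset Strict Implicit. Unset Printing Implicit Defensive.
Import GRing.Theory Num.Theory.
Local Open Scope ring_scope.

(* Consecutive partition P = {V_1,...,V_h} of {1..n}: given by the block sizes
   s : 'I_h -> nat (block k has size s k), n = \sum_k s k; MathComp's
   block-matrix machinery (mxblock/submxblock/submxcol) splits the index set
   'I_(\sum_k s k) into consecutive intervals in order.  Blocks are indexed
   0-based by 'I_h (block k <-> V_{k+1}). *)

Definition blk (h : nat) (s : 'I_h -> nat) (A : 'M[algC]_(\sum_(k < h) s k))
  (k l : 'I_h) : 'M[algC]_(s k, s l) := submxblock A k l.

Definition h_cyclic (h : nat) (s : 'I_h -> nat) (A : 'M[algC]_(\sum_(k < h) s k)) :=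
  forall k l : 'I_h, l != ordS k -> blk A k l = 0.

(* alpha(i) = (i mod h) + 1 (1-based) is ordS on 'I_h (0-based);
   alpha^{-1} is ord_pred. *)
Definition alpha (h : nat) (i : 'I_h) : 'I_h := ordS i.
Definition alphaV (h : nat) (i : 'I_h) : 'I_h := ord_pred i.

(* B_{ip} = prod_{j=h+1-p}^{h} A_{alpha^{j-1}(i), alpha^j(i)} (increasing j),
   a (|V_{alpha^{-p}(i)}| x |V_i|) matrix.  Defined by peeling off the first
   (leftmost) factor: B_{i,0} = I (empty product) and
   B_{i,p+1} = A_{alpha^{-(p+1)}(i), alpha^{-p}(i)} B_{i,p},
   using alpha^{j}(i) = alpha^{j-h}(i) = (alphaV)^{h-j}(i). *)
Fixpoint Bmx (h : nat) (s : 'I_h -> nat) (A : 'M[algC]_(\sum_(k < h) s k))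
  (i : 'I_h) (p : nat) : 'M[algC]_(s (iter p (@alphaV h) i), s i) :=
  match p return 'M[algC]_(s (iter p (@alphaV h) i), s i) with
  | 0 => 1%:M
  | p'.+1 => blk A (iter p'.+1 (@alphaV h) i) (iter p' (@alphaV h) i)
             *m Bmx A i p'
  end.

(* The column block k of A w is \sum_l A_{kl} w_l.  If w is supported on the
   single block q, this leaves A_{kq} w_q, and h-cyclicity kills it unless
   k = alpha^{-1}(q).  So each multiplication by A moves the support one step
   backwards along alpha, picking up the factor A_{alpha^{-1}(q), q}; iterating
   p times yields B_{ip} x on block alpha^{-p}(i). *)
From mathcomp Require Import all_boot all_order all_algebra all_field.
Import GRing.Theory Num.Theory.
Local Open Scope ring_scope.

Lemma submxcol_mul (R : pzRingType) (h : nat) (s : 'I_h -> nat)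
    (A : 'M[R]_(\sum_(k < h) s k)) (w : 'cV[R]_(\sum_(k < h) s k)) (k : 'I_h) :
  submxcol (A *m w) k = \sum_l submxblock A k l *m submxcol w l.
Proof.
have -> : A *m w = \mxblock_(k, l) submxblock A k l *m \mxcol_l submxcol w l.
  by rewrite submxblockK submxcolK.
by rewrite mul_mxblock_mxrow mxcolK.
Qed.

Section CyclicPropagation.

Variables (h : nat) (s : 'I_h -> nat) (A : 'M[algC]_(\sum_(k < h) s k)).

Lemma submxcol_mul_supported {q k : 'I_h} {w : 'cV[algC]_(\sum_(k < h) s k)} :
    (forall l, l != q -> submxcol w l = 0) ->
  submxcol (A *m w) k = blk A k q *m submxcol w q.
Proof.
move=> w_q; rewrite submxcol_mul (bigD1 q) //= big1 ?addr0 // => l lq.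
by rewrite w_q ?mulmx0.
Qed.

Hypothesis A_cyclic : h_cyclic A.

Lemma h_cyclic_blk_eq0 (k q : 'I_h) : k != alphaV q -> blk A k q = 0.
Proof.
move=> kq; apply: A_cyclic; apply: contra kq => /eqP->.
by rewrite /alphaV ordSK.
Qed.

Lemma submxcol_expr_mul_supported (i : 'I_h) (v : 'cV[algC]_(\sum_(k < h) s k))
    (p : nat) :
    (forall k, k != i -> submxcol v k = 0) ->
  submxcol (A ^+ p *m v) (iter p (@alphaV h) i) = Bmx A i p *m submxcol v i /\
  (forall k, k != iter p (@alphaV h) i -> submxcol (A ^+ p *m v) k = 0).
Proof.
move=> v_i; elim: p => [|p [IHq IHk]]; first by rewrite expr0 !mul1mx.
rewrite exprS -mulmxE -mulmxA; split.
  by rewrite (submxcol_mul_supported IHk) IHq mulmxA.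
move=> k kq; rewrite (submxcol_mul_supported IHk).
by rewrite h_cyclic_blk_eq0 ?mul0mx.
Qed.

End CyclicPropagation.

Theorem lemma5p2 (h : nat) (s : 'I_h -> nat) (Hs : forall k, (0 < s k)%N)
  (A : 'M[algC]_(\sum_(k < h) s k)) (Hcyc : h_cyclic A)
  (i : 'I_h) (x : 'cV[algC]_(s i)) (v : 'cV[algC]_(\sum_(k < h) s k))
  (Hvi : submxcol v i = x) (Hvk : forall k, k != i -> submxcol v k = 0)
  (p : nat) (Hp : (0 < p)%N) :
  submxcol (A ^+ p *m v) (iter p (@alphaV h) i) = Bmx A i p *m x /\
  (forall k, k != iter p (@alphaV h) i -> submxcol (A ^+ p *m v) k = 0).
Proof. by rewrite -Hvi; exact: submxcol_expr_mul_supported. Qed.
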